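(* Let $(h_k)_{k\ge1}$ be the Narayana sequence and let $\alpha$ be the real root of $x^3+x=1$. Then $\|\alpha h_k\|$ decreases exponentially as $k\to\infty$, i.e. there are constants $C>0$ and $0<\rho<1$ with $\|\alpha h_k\|\le C\rho^k$ for all $k$. The same holds with $\alpha$ replaced by any $\beta\in\mathbb{Z}[\alpha]$.
   Context: The Narayana sequence is defined by $h_1=1$, $h_2=2$, $h_3=3$ and $h_k=h_{k-1}+h_{k-3}$ for $k>3$. For real $x$, $\|x\|$ denotes the distance from $x$ to the nearest integer. *)

From Stdlib Require Import Reals ZArith List.
Open Scope R_scope.

(* nara n = h_(n+1): h_1 = 1, h_2 = 2, h_3 = 3, h_k = h_(k-1) + h_(k-3). *)
Fixpoint nara (n : nat) : nat :=
  match n with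
  | O => 1
  | S O => 2
  | S (S O) => 3
  | S (S (S m) as p) => (nara p + nara m)%nat
  end.

Definition narayana (k : nat) : nat := nara (k - 1).

Definition dist_nint (x : R) : R := Rmin (frac_part x) (1 - frac_part x).

(* beta belongs to Z[alpha]: beta = p(alpha) for some integer polynomial p,
   given by its coefficient list (constant term first, Horner evaluation). *)
Definition Zpoly_eval (alpha : R) (l : list Z) : R :=
  fold_right (fun c acc => IZR c + alpha * acc) 0 l.

Definition in_Z_adjoin (alpha beta : R) : Prop :=
  exists l : list Z, beta = Zpoly_eval alpha l.

(* Indexing as in [nara] (h_n := nara n), the defect e_n = α h_(n+1) - h_n satisfies
   e_(n+2) = -α² e_(n+1) - α e_n, because α³ + α = 1.  The quadratic form
   Q(x, y) = y² + α² x y + α x², which is positive definite since α⁴ < 4α,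
   is multiplied by α along this recurrence, so e_n² ≤ c α^n and
   |e_n| = O(√α^n).  Hence α h_n is exponentially close to the integer
   h_(n-1).  Approximability of β h_n by integers at rate √α^n is preserved
   by integer constants, sums and multiplication by α (as
   αβ h_(n+1) = β h_n + β e_n), so it holds on all of Z[α]. *)

From Stdlib Require Import Reals ZArith List Lra Lia Psatz.
Open Scope R_scope.

Lemma dist_nint_le_Rabs_sub (x : R) (z : Z) : dist_nint x <= Rabs (x - IZR z).
Proof.
  unfold dist_nint, frac_part.
  destruct (base_Int_part x) as [Hlo Hhi].
  destruct (Z_le_gt_dec z (Int_part x)) as [Hz | Hz].
  - apply IZR_le in Hz.
    apply (Rle_trans _ _ _ (Rmin_l _ _)).
    rewrite Rabs_right; lra.
  - assert (Hz' : (Int_part x + 1 <= z)%Z) by lia.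
    apply IZR_le in Hz'; rewrite plus_IZR in Hz'.
    apply (Rle_trans _ _ _ (Rmin_r _ _)).
    rewrite Rabs_left; lra.
Qed.

Lemma nara_SSS (n : nat) : nara (S (S (S n))) = (nara (S (S n)) + nara n)%nat.
Proof. reflexivity. Qed.

Section NarayanaDefect.

Variable a : R.
Hypothesis ha : a ^ 3 + a = 1.

Lemma narayana_root_bounds : 0 < a < 1.
Proof. split; nra. Qed.

Definition defect (n : nat) : R := a * INR (nara (S n)) - INR (nara n).

Lemma defect_rec (n : nat) :
  defect (S (S n)) = - a ^ 2 * defect (S n) - a * defect n.
Proof.
  unfold defect; rewrite nara_SSS, plus_INR.
  assert (Hz : INR (nara (S (S n))) * (a ^ 3 + a - 1) = 0)
    by (rewrite ha; ring).
  lra.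
Qed.

Definition quad (x y : R) : R := y ^ 2 + a ^ 2 * x * y + a * x ^ 2.

Lemma quad_defect_pow (n : nat) :
  quad (defect n) (defect (S n)) = a ^ n * quad (defect 0) (defect 1).
Proof.
  induction n as [|n IH]; [simpl; ring|].
  transitivity (a * quad (defect n) (defect (S n))).
  - unfold quad; rewrite defect_rec; ring.
  - rewrite IH; simpl; ring.
Qed.

Lemma quad_ge (x y : R) : 3 * a / 4 * x ^ 2 <= quad x y.
Proof.
  destruct narayana_root_bounds as [Ha0 Ha1].
  assert (Hsq : quad x y = (y + a ^ 2 * x / 2) ^ 2 + (a - a ^ 4 / 4) * x ^ 2)
    by (unfold quad; field).
  rewrite Hsq.
  assert (a ^ 4 <= a) by nra.
  pose proof (pow2_ge_0 (y + a ^ 2 * x / 2)).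
  pose proof (pow2_ge_0 x).
  nra.
Qed.

Lemma defect_bound : exists K, 0 <= K /\ forall n, Rabs (defect n) <= K * sqrt a ^ n.
Proof.
  destruct narayana_root_bounds as [Ha0 Ha1].
  set (Q0 := quad (defect 0) (defect 1)).
  set (c := 3 * a / 4).
  assert (Hc : 0 < c) by (unfold c; lra).
  assert (HQ0 : 0 <= Q0).
  { pose proof (quad_ge (defect 0) (defect 1)); pose proof (pow2_ge_0 (defect 0)).
    unfold Q0; nra. }
  assert (HQc : 0 <= Q0 / c)
    by (apply Rmult_le_pos; [exact HQ0 | apply Rlt_le, Rinv_0_lt_compat, Hc]).
  exists (sqrt (Q0 / c)); split; [apply sqrt_pos|].
  intro n.
  assert (Hsq : defect n ^ 2 <= (sqrt (Q0 / c) * sqrt a ^ n) ^ 2).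
  { rewrite Rpow_mult_distr, pow2_sqrt by exact HQc.
    rewrite <- pow_mult, Nat.mul_comm, pow_mult, pow2_sqrt by lra.
    apply (Rmult_le_reg_l c); [exact Hc|].
    replace (c * (Q0 / c * a ^ n)) with (a ^ n * Q0) by (field; lra).
    unfold Q0; rewrite <- quad_defect_pow; apply quad_ge. }
  assert (Hpos : 0 <= sqrt (Q0 / c) * sqrt a ^ n)
    by (apply Rmult_le_pos; [apply sqrt_pos | apply pow_le, sqrt_pos]).
  rewrite <- (Rabs_right (sqrt (Q0 / c) * sqrt a ^ n)) by lra.
  apply Rsqr_le_abs_0; unfold Rsqr; simpl in Hsq; lra.
Qed.

Definition narayana_approx (b : R) : Prop :=
  exists (N : nat -> Z) (C : R),
    forall n, Rabs (b * INR (nara n) - IZR (N n)) <= C * sqrt a ^ n.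

Lemma narayana_approx_IZR (z : Z) : narayana_approx (IZR z).
Proof.
  exists (fun n => (z * Z.of_nat (nara n))%Z), 0; intro n.
  rewrite mult_IZR, <- INR_IZR_INZ, Rminus_diag, Rabs_R0; lra.
Qed.

Lemma narayana_approxD (b1 b2 : R) :
  narayana_approx b1 -> narayana_approx b2 -> narayana_approx (b1 + b2).
Proof.
  intros [N1 [C1 H1]] [N2 [C2 H2]].
  exists (fun n => (N1 n + N2 n)%Z), (C1 + C2); intro n.
  rewrite plus_IZR.
  replace ((b1 + b2) * INR (nara n) - (IZR (N1 n) + IZR (N2 n))) with
    ((b1 * INR (nara n) - IZR (N1 n)) + (b2 * INR (nara n) - IZR (N2 n))) by ring.
  apply (Rle_trans _ _ _ (Rabs_triang _ _)).
  specialize (H1 n); specialize (H2 n); lra.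
Qed.

Lemma narayana_approxM (b : R) : narayana_approx b -> narayana_approx (a * b).
Proof.
  intros [N [C H]].
  destruct narayana_root_bounds as [Ha0 Ha1].
  destruct defect_bound as [K [HK HKb]].
  set (r := sqrt a).
  assert (Hr : 0 < r) by (apply sqrt_lt_R0; lra).
  set (C' := (Rabs C + Rabs b * K) / r + Rabs (a * b)).
  assert (HC' : 0 <= (Rabs C + Rabs b * K) / r).
  { apply Rmult_le_pos; [|apply Rlt_le, Rinv_0_lt_compat, Hr].
    pose proof (Rabs_pos C); pose proof (Rabs_pos b); nra. }
  exists (fun n => match n with O => 0%Z | S m => N m end), C'.
  intros [|n]; fold r.
  - simpl; rewrite Rmult_1_r, Rminus_0_r.
    unfold C'; lra.
  - assert (Ht : 0 < r ^ n) by (apply pow_lt; exact Hr).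
    replace (a * b * INR (nara (S n)) - IZR (N n)) with
      ((b * INR (nara n) - IZR (N n)) + b * defect n) by (unfold defect; ring).
    apply (Rle_trans _ _ _ (Rabs_triang _ _)).
    rewrite Rabs_mult.
    specialize (H n); specialize (HKb n); fold r in H, HKb.
    assert (C * r ^ n <= Rabs C * r ^ n) by (apply Rmult_le_compat_r; [lra | apply Rle_abs]).
    assert (Rabs b * Rabs (defect n) <= Rabs b * (K * r ^ n))
      by (apply Rmult_le_compat_l; [apply Rabs_pos | exact HKb]).
    assert (0 <= Rabs (a * b) * r ^ S n)
      by (apply Rmult_le_pos; [apply Rabs_pos | apply pow_le; lra]).
    replace (C' * r ^ S n) with
      ((Rabs C + Rabs b * K) * r ^ n + Rabs (a * b) * r ^ S n)
      by (unfold C'; simpl; field; lra).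
    lra.
Qed.

Lemma narayana_approx_Zpoly (l : list Z) : narayana_approx (Zpoly_eval a l).
Proof.
  induction l as [|c l IH]; simpl.
  - exact (narayana_approx_IZR 0).
  - apply narayana_approxD; [apply narayana_approx_IZR | exact (narayana_approxM _ IH)].
Qed.

Lemma dist_nint_narayana_decay (b : R) : in_Z_adjoin a b ->
  exists C rho : R, 0 < C /\ 0 < rho < 1 /\
    forall k : nat, (1 <= k)%nat -> dist_nint (b * INR (narayana k)) <= C * rho ^ k.
Proof.
  intros [l ->].
  destruct (narayana_approx_Zpoly l) as [N [C H]].
  destruct narayana_root_bounds as [Ha0 Ha1].
  set (r := sqrt a) in H.
  assert (Hr : 0 < r < 1).
  { split; [apply sqrt_lt_R0; lra|].
    rewrite <- sqrt_1; apply sqrt_lt_1_alt; lra. }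
  exists ((Rabs C + 1) / r), r.
  split; [apply Rdiv_lt_0_compat; pose proof (Rabs_pos C); lra|].
  split; [exact Hr|].
  intros [|m] Hk; [lia|].
  unfold narayana; replace (S m - 1)%nat with m by lia.
  apply (Rle_trans _ _ _ (dist_nint_le_Rabs_sub _ (N m))).
  apply (Rle_trans _ _ _ (H m)).
  assert (Ht : 0 < r ^ m) by (apply pow_lt; lra).
  replace ((Rabs C + 1) / r * r ^ S m) with ((Rabs C + 1) * r ^ m)
    by (simpl; field; lra).
  apply Rmult_le_compat_r; [lra|].
  pose proof (Rle_abs C); lra.
Qed.

End NarayanaDefect.

Theorem mainTheorem3 (alpha : R) (halpha : alpha ^ 3 + alpha = 1) :
  (exists C rho : R, 0 < C /\ 0 < rho < 1 /\
     forall k : nat, (1 <= k)%nat ->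
       dist_nint (alpha * INR (narayana k)) <= C * rho ^ k) /\
  (forall beta : R, in_Z_adjoin alpha beta ->
     exists C rho : R, 0 < C /\ 0 < rho < 1 /\
       forall k : nat, (1 <= k)%nat ->
         dist_nint (beta * INR (narayana k)) <= C * rho ^ k).
Proof.
  split; [|exact (dist_nint_narayana_decay alpha halpha)].
  apply (dist_nint_narayana_decay alpha halpha).
  exists (0%Z :: 1%Z :: nil); simpl; ring.
Qed.
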